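(* Let $G$ be a finite group and $\mathcal{A}$ a finite subgroup of $\mathbb{C}^\times$. Let $\psi\colon G\times G\to\mathcal{A}$ be a normalised 2-cocycle, and let $\Gamma=(G,\mathcal{A},\psi)$ be the central extension with underlying set $\mathcal{A}\times G$ and multiplication $(a,g)(b,h)=(ab\,\psi(g,h),gh)$. Index rows and columns of $|G|\times|G|$ matrices by the elements of $G$ in a fixed ordering, and for $(a,g)\in\Gamma$ define \[R(a,g)=a\left[\psi(x,g)\delta^{xg}_{y}\right]_{x,y\in G},\qquad L(a,g)=a\left[\psi(g,g^{-1}x)\delta^{x}_{gy}\right]_{x,y\in G}.\] Then a complex matrix $M$ indexed by $G$ satisfies $R(a,g)ML(a,g)^\ast=M$ for all $(a,g)\in\Gamma$ if and only if there exists a map $\phi\colon G\to\mathbb{C}$ such that $M=[\psi(x,y)\phi(xy)]_{x,y\in G}$.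
   Context: A normalised 2-cocycle is a function $\psi\colon G\times G\to\mathcal{A}$ with $\psi(g,1)=\psi(1,g)=1$ and $\psi(g,h)\psi(gh,k)=\psi(g,hk)\psi(h,k)$ for all $g,h,k\in G$. $\delta^a_b$ is the Kronecker delta and $^\ast$ denotes conjugate transpose. *)

(* The complex numbers are modelled as R[i] = complex R
   for an arbitrary R : realType (mathcomp-real-closed's complex numbers
   over a model of the reals). *)
From HB Require Import structures.
From mathcomp Require Import all_boot all_order all_algebra all_fingroup.
From mathcomp Require Import complex reals.
Set Implicit Arguments.
Unset Strict Implicit.
Unset Printing Implicit Defensive.
Import GRing.Theory Num.Theory.
Local Open Scope ring_scope.

(* The elements of the finite group gT, in the fixed ordering enum gT;
   rows/columns of |G| x |G| matrices are indexed through this ordering. *)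
Definition gidx (gT : finGroupType) (i : 'I_#|gT|) : gT := enum_val i.

Definition finite_subgroup_units (C : fieldType) (A : seq C) : Prop :=
  [/\ 0 \notin A, 1 \in A,
      {in A &, forall a b, a * b \in A} &
      {in A, forall a, a^-1 \in A}].

Definition normalised_cocycle (gT : finGroupType) (C : fieldType)
    (A : seq C) (psi : gT -> gT -> C) : Prop :=
  [/\ forall g h, psi g h \in A,
      forall g, psi g 1%g = 1 /\ psi 1%g g = 1 &
      forall g h k, psi g h * psi (g * h)%g k = psi g (h * k)%g * psi h k].

Definition Rmat (gT : finGroupType) (C : fieldType) (psi : gT -> gT -> C)
    (a : C) (g : gT) : 'M[C]_#|gT| :=
  \matrix_(i, j) (a * (psi (gidx i) g * ((gidx i * g)%g == gidx j)%:R)).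

Definition Lmat (gT : finGroupType) (C : fieldType) (psi : gT -> gT -> C)
    (a : C) (g : gT) : 'M[C]_#|gT| :=
  \matrix_(i, j) (a * (psi g (g^-1 * gidx i)%g * (gidx i == (g * gidx j)%g)%:R)).

Definition adjmx (C : numClosedFieldType) (m n : nat) (M : 'M[C]_(m, n))
  : 'M[C]_(n, m) := (map_mx Num.conj M)^T.

From mathcomp Require Import all_boot all_order all_algebra all_fingroup.
From mathcomp Require Import complex reals ring.
Set Implicit Arguments.
Unset Strict Implicit.
Unset Printing Implicit Defensive.
Import GRing.Theory Num.Theory.
Local Open Scope ring_scope.

(* Elements of a finite subgroup of C^x are roots of unity, hence of modulus
   one, so a^* = a^-1 for every a in A and every value of psi.  The (x, y)
   entry of R(a,g) M L(a,g)^* is then psi(x,g) psi(g,g^-1 y)^-1 M(xg, g^-1 y),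
   and the cocycle identity
     psi(x,g) psi(xg, g^-1 y) = psi(x,y) psi(g, g^-1 y)
   makes [psi(x,y) phi(xy)] invariant.  Conversely, for an invariant M the
   choice g = x^-1 relates M(x,y) to M(1,xy), so phi(z) := M(1,z) works. *)

Section FiniteSubgroupUnits.

Variables (C : fieldType) (A : seq C).
Hypothesis finA : finite_subgroup_units A.

Lemma finite_subgroup_units_neq0 a : a \in A -> a != 0.
Proof. by case: finA => A0 _ _ _; apply: contraTneq => ->. Qed.

Lemma finite_subgroup_unitsX a k : a \in A -> a ^+ k \in A.
Proof.
case: finA => _ A1 AM _ aA.
by elim: k => [|k IHk]; rewrite ?expr0 // exprS AM.
Qed.

Lemma finite_subgroup_units_unity_root a :
  a \in A -> exists2 n, (0 < n)%N & a ^+ n = 1.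
Proof.
move=> aA; set s := mkseq (fun k => a ^+ k) (size A).+1.
have /(uniqPn 0) [i [j [lt_ij lt_js]]] : ~~ uniq s.
  apply: contraT => /negbNE uniq_s.
  have sub_sA : {subset s <= A}.
    by move=> _ /mapP [k _ ->]; exact: finite_subgroup_unitsX.
  by have := uniq_leq_size uniq_s sub_sA; rewrite size_mkseq ltnn.
rewrite size_mkseq in lt_js.
rewrite !nth_mkseq ?(ltn_trans lt_ij) // => eq_ij.
exists (j - i)%N; first by rewrite subn_gt0.
apply: (mulfI (expf_neq0 i (finite_subgroup_units_neq0 aA))).
by rewrite -exprD subnKC ?(ltnW lt_ij) // mulr1.
Qed.

End FiniteSubgroupUnits.

Lemma norm_unity_root (C : numDomainType) (a : C) n :
  (0 < n)%N -> a ^+ n = 1 -> `|a| = 1.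
Proof.
move=> n_gt0 an1; apply/eqP.
by rewrite -(pexpr_eq1 n_gt0) // -normrX an1 normr1.
Qed.

Lemma conj_finite_subgroup_units (C : numClosedFieldType) (A : seq C) a :
  finite_subgroup_units A -> a \in A -> a^* = a^-1.
Proof.
move=> finA aA; have [n n_gt0 an1] := finite_subgroup_units_unity_root finA aA.
by rewrite invC_norm (norm_unity_root n_gt0 an1) expr1n invr1 mul1r.
Qed.

Lemma cocycle_shift (gT : finGroupType) (C : fieldType) (A : seq C)
    (psi : gT -> gT -> C) x g y :
  normalised_cocycle A psi ->
  psi x g * psi (x * g)%g (g^-1 * y)%g = psi x y * psi g (g^-1 * y)%g.
Proof. by case=> _ _ psiM; rewrite psiM mulKVg. Qed.

Section CocycleMatrices.

Variables (C : numClosedFieldType) (gT : finGroupType).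
Implicit Types (psi : gT -> gT -> C) (M N : 'M[C]_#|gT|).

Lemma gidxK : cancel (@enum_rank gT) (@gidx gT).
Proof. exact: enum_rankK. Qed.

Lemma sum_delta_gidx (F : 'I_#|gT| -> C) x :
  \sum_k ((x == gidx k)%:R * F k) = F (enum_rank x).
Proof.
rewrite (bigD1 (enum_rank x)) //= gidxK eqxx mul1r big1 ?addr0 // => k.
move=> /negbTE ne_k; rewrite (_ : x == _ = false) ?mul0r //.
by apply: contraFF ne_k => /eqP ->; rewrite /gidx enum_valK.
Qed.

Lemma mulmx_Rmat psi a g M i j :
  (Rmat psi a g *m M) i j =
  a * psi (gidx i) g * M (enum_rank (gidx i * g)%g) j.
Proof.
rewrite mxE -(sum_delta_gidx (fun k => a * psi (gidx i) g * M k j)).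
by apply: eq_bigr => k _; rewrite mxE; ring.
Qed.

Lemma mulmx_adj_Lmat psi a g N i j :
  (N *m adjmx (Lmat psi a g)) i j =
  (a * psi g (g^-1 * gidx j)%g)^* * N i (enum_rank (g^-1 * gidx j)%g).
Proof.
set c := (a * psi g (g^-1 * gidx j)%g)^*.
rewrite mxE -(sum_delta_gidx (fun k => c * N i k)).
apply: eq_bigr => k _; rewrite !mxE /= !rmorphM /= rmorph_nat.
rewrite -(inj_eq (mulgI g^-1%g)) mulKg; ring.
Qed.

Lemma Rmat_mulmx_adj_Lmat_entry psi a g M i j :
  (Rmat psi a g *m M *m adjmx (Lmat psi a g)) i j =
  a * a^* * (psi (gidx i) g * (psi g (g^-1 * gidx j)%g)^*) *
  M (enum_rank (gidx i * g)%g) (enum_rank (g^-1 * gidx j)%g).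
Proof.
by rewrite mulmx_adj_Lmat mulmx_Rmat rmorphM /=; ring.
Qed.

Definition cocycle_mx psi (phi : gT -> C) : 'M[C]_#|gT| :=
  \matrix_(i, j) (psi (gidx i) (gidx j) * phi (gidx i * gidx j)%g).

Variables (A : seq C) (psi : gT -> gT -> C).
Hypotheses (finA : finite_subgroup_units A) (psiA : normalised_cocycle A psi).

Lemma conj_cocycle g h : (psi g h)^* = (psi g h)^-1.
Proof.
by case: psiA => inA _ _; exact: conj_finite_subgroup_units finA (inA g h).
Qed.

Lemma cocycle_neq0 g h : psi g h != 0.
Proof.
by case: psiA => inA _ _; have := finite_subgroup_units_neq0 finA (inA g h).
Qed.

Lemma cocycle_mx_invariant phi a g : a \in A ->
  Rmat psi a g *m cocycle_mx psi phi *m adjmx (Lmat psi a g) =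
  cocycle_mx psi phi.
Proof.
move=> aA; apply/matrixP => i j.
rewrite Rmat_mulmx_adj_Lmat_entry !mxE !gidxK.
rewrite (conj_finite_subgroup_units finA aA).
rewrite mulfV ?(finite_subgroup_units_neq0 finA aA) // mul1r conj_cocycle.
rewrite -mulgA mulKVg mulrA [_ / _ * _]mulrAC.
by rewrite (cocycle_shift _ _ _ psiA) mulfK ?cocycle_neq0.
Qed.

Lemma invariant_cocycle_mx M :
  (forall g, Rmat psi 1 g *m M *m adjmx (Lmat psi 1 g) = M) ->
  M = cocycle_mx psi (fun z => M (enum_rank 1%g) (enum_rank z)).
Proof.
move=> invM; apply/matrixP => i j; rewrite mxE.
rewrite -{1}(invM (gidx i)^-1%g) Rmat_mulmx_adj_Lmat_entry invgK mulgV.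
have := cocycle_shift (gidx i) (gidx i)^-1 (gidx j) psiA.
case: psiA => _ psi1 _; rewrite mulgV invgK (proj2 (psi1 _)) mulr1 => ->.
by rewrite rmorph1 !mul1r conj_cocycle mulfK ?cocycle_neq0.
Qed.

End CocycleMatrices.

Theorem lemma4p3 (R : realType) (gT : finGroupType) (A : seq R[i])
    (psi : gT -> gT -> R[i]) :
  finite_subgroup_units A ->
  normalised_cocycle A psi ->
  forall M : 'M[R[i]]_#|gT|,
    (forall (a : R[i]) (g : gT), a \in A ->
       Rmat psi a g *m M *m adjmx (Lmat psi a g) = M)
    <->
    (exists phi : gT -> R[i],
       M = \matrix_(i, j) (psi (gidx i) (gidx j) * phi (gidx i * gidx j)%g)).
Proof.
move=> finA psiA M; split=> [invM | [phi ->] a g aA].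
- have [_ A1 _ _] := finA.
  exists (fun z => M (enum_rank 1%g) (enum_rank z)).
  by apply: (invariant_cocycle_mx finA psiA) => g; exact: invM _ _ A1.
- exact: (cocycle_mx_invariant finA psiA phi g aA).
Qed.
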